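(* Let $(E_j)_{j\in J}$ be a family of nonzero complete metrizable topological vector spaces with $J$ uncountable, and let $E_0=\{(x_j)\in\prod_{j\in J}E_j:|\{j:x_j\ne0\}|\le\aleph_0\}$ be the $\Sigma$-product, with the subspace topology of the product. Then $E_0$ is a Baire, non-metrizable Fréchet–Urysohn topological vector space which does not have countable $cn$-character.
   Context: For $x\in X$, a family $\mathcal{N}$ of subsets of $X$ is a $cn$-network at $x$ if for each neighborhood $O_x$ of $x$ the set $\bigcup\{N\in\mathcal{N}:x\in N\subseteq O_x\}$ is a neighborhood of $x$; the $cn$-character of $X$ is the supremum over $x$ of the least cardinality of a $cn$-network at $x$. *)

From Stdlib Require Import Reals List Arith Classical.
Open Scope R_scope.

Definition countable_set {T : Type} (A : T -> Prop) : Prop :=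
  exists s : nat -> option T, forall t, A t -> exists n, s n = Some t.

Definition is_topology {X : Type} (op : (X -> Prop) -> Prop) : Prop :=
  op (fun _ => True) /\
  (forall U V, op U -> op V -> op (fun x => U x /\ V x)) /\
  (forall F : (X -> Prop) -> Prop,
      (forall U, F U -> op U) -> op (fun x => exists U, F U /\ U x)).

Record is_vector_space {X : Type} (z : X) (add : X -> X -> X) (opp : X -> X)
    (scale : R -> X -> X) : Prop := {
  vs_addA : forall x y w, add x (add y w) = add (add x y) w;
  vs_addC : forall x y, add x y = add y x;
  vs_add0 : forall x, add x z = x;
  vs_addN : forall x, add x (opp x) = z;
  vs_scaleA : forall a b x, scale a (scale b x) = scale (a * b) x;
  vs_scale1 : forall x, scale 1 x = x;
  vs_scaleDr : forall a x y, scale a (add x y) = add (scale a x) (scale a y);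
  vs_scaleDl : forall a b x, scale (a + b) x = add (scale a x) (scale b x) }.

(* continuity of X x X -> X at every point, for the product topology *)
Definition add_continuous {X : Type} (op : (X -> Prop) -> Prop)
    (add : X -> X -> X) : Prop :=
  forall x y W, op W -> W (add x y) ->
    exists U V, op U /\ op V /\ U x /\ V y /\
      forall a b, U a -> V b -> W (add a b).

(* continuity of R x X -> X at every point (usual topology on R) *)
Definition scale_continuous {X : Type} (op : (X -> Prop) -> Prop)
    (scale : R -> X -> X) : Prop :=
  forall t x W, op W -> W (scale t x) ->
    exists d V, 0 < d /\ op V /\ V x /\
      forall s b, Rabs (s - t) < d -> V b -> W (scale s b).

Record is_tvs {X : Type} (z : X) (add : X -> X -> X) (opp : X -> X)
    (scale : R -> X -> X) (op : (X -> Prop) -> Prop) : Prop := {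
  tvs_vs : is_vector_space z add opp scale;
  tvs_top : is_topology op;
  tvs_add_cont : add_continuous op add;
  tvs_scale_cont : scale_continuous op scale }.

Record tvs : Type := {
  tv_car :> Type;
  tv_zero : tv_car;
  tv_add : tv_car -> tv_car -> tv_car;
  tv_opp : tv_car -> tv_car;
  tv_scale : R -> tv_car -> tv_car;
  tv_open : (tv_car -> Prop) -> Prop;
  tv_ax : is_tvs tv_zero tv_add tv_opp tv_scale tv_open }.

Definition nonzero_tvs (E : tvs) : Prop := exists x : E, x <> tv_zero E.

Definition is_metric {X : Type} (d : X -> X -> R) : Prop :=
  (forall x y, 0 <= d x y) /\ (forall x y, d x y = 0 <-> x = y) /\
  (forall x y, d x y = d y x) /\ (forall x y w, d x w <= d x y + d y w).

Definition metric_induces {X : Type} (op : (X -> Prop) -> Prop)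
    (d : X -> X -> R) : Prop :=
  forall U, op U <-> (forall x, U x -> exists e, 0 < e /\ forall y, d x y < e -> U y).

Definition metrizable {X : Type} (op : (X -> Prop) -> Prop) : Prop :=
  exists d, is_metric d /\ metric_induces op d.

Definition cauchy_seq {X : Type} (d : X -> X -> R) (u : nat -> X) : Prop :=
  forall e, 0 < e -> exists N, forall m n, (N <= m)%nat -> (N <= n)%nat -> d (u m) (u n) < e.

Definition metric_conv {X : Type} (d : X -> X -> R) (u : nat -> X) (l : X) : Prop :=
  forall e, 0 < e -> exists N, forall n, (N <= n)%nat -> d (u n) l < e.

(* complete metrizable TVS (F-space): topology given by a complete
   translation-invariant metric *)
Definition complete_metrizable_tvs (E : tvs) : Prop :=
  exists d : E -> E -> R, is_metric d /\ metric_induces (tv_open E) d /\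
    (forall x y w, d (tv_add E x w) (tv_add E y w) = d x y) /\
    (forall u, cauchy_seq d u -> exists l, metric_conv d u l).

Definition is_nbhd {X : Type} (op : (X -> Prop) -> Prop) (x : X) (N : X -> Prop) : Prop :=
  exists U, op U /\ U x /\ forall y, U y -> N y.

Definition dense {X : Type} (op : (X -> Prop) -> Prop) (D : X -> Prop) : Prop :=
  forall U, op U -> (exists x, U x) -> exists x, U x /\ D x.

Definition baire {X : Type} (op : (X -> Prop) -> Prop) : Prop :=
  forall D : nat -> X -> Prop, (forall n, op (D n) /\ dense op (D n)) ->
    dense op (fun x => forall n, D n x).

Definition seq_conv {X : Type} (op : (X -> Prop) -> Prop) (u : nat -> X) (x : X) : Prop :=
  forall U, op U -> U x -> exists N, forall n, (N <= n)%nat -> U (u n).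

Definition frechet_urysohn {X : Type} (op : (X -> Prop) -> Prop) : Prop :=
  forall (A : X -> Prop) (x : X),
    (forall U, op U -> U x -> exists a, U a /\ A a) ->
    exists u : nat -> X, (forall n, A (u n)) /\ seq_conv op u x.

Definition cn_network {X : Type} (op : (X -> Prop) -> Prop) (x : X)
    (NN : (X -> Prop) -> Prop) : Prop :=
  forall O, is_nbhd op x O ->
    is_nbhd op x (fun y => exists N, NN N /\ N x /\ (forall w, N w -> O w) /\ N y).

Definition countable_cn_character {X : Type} (op : (X -> Prop) -> Prop) : Prop :=
  forall x, exists NN, countable_set NN /\ cn_network op x NN.

Definition prod_open {J : Type} (E : J -> tvs) (U : (forall j, E j) -> Prop) : Prop :=
  forall x, U x -> exists (l : list J) (V : forall j, E j -> Prop),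
    (forall j, In j l -> tv_open (E j) (V j) /\ V j (x j)) /\
    (forall y, (forall j, In j l -> V j (y j)) -> U y).

Definition supp {J : Type} {E : J -> tvs} (x : forall j, E j) : J -> Prop :=
  fun j => x j <> tv_zero (E j).

Definition sigma_product {J : Type} (E : J -> tvs) : Type :=
  { x : forall j, E j | countable_set (supp x) }.

Definition sigma_open {J : Type} (E : J -> tvs) (W : sigma_product E -> Prop) : Prop :=
  exists O, prod_open E O /\ forall z, W z <-> O (proj1_sig z).

Lemma vs_scale0 (E : tvs) a : tv_scale E a (tv_zero E) = tv_zero E.
Proof.
  destruct (tvs_vs _ _ _ _ _ (tv_ax E)) as [A C Z N _ _ Dr _].
  assert (H : tv_scale E a (tv_zero E) = tv_add E (tv_scale E a (tv_zero E)) (tv_scale E a (tv_zero E)))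
    by (rewrite <- Dr, Z; reflexivity).
  remember (tv_scale E a (tv_zero E)) as s eqn:Hs. clear Hs.
  transitivity (tv_add E s (tv_add E s (tv_opp E s))).
  - rewrite N, Z. reflexivity.
  - rewrite A, <- H, N. reflexivity.
Qed.

Lemma vs_opp0 (E : tvs) : tv_opp E (tv_zero E) = tv_zero E.
Proof.
  destruct (tvs_vs _ _ _ _ _ (tv_ax E)) as [A C Z N _ _ _ _].
  transitivity (tv_add E (tv_opp E (tv_zero E)) (tv_zero E)).
  - rewrite Z. reflexivity.
  - rewrite C, N. reflexivity.
Qed.

Lemma countable_union {T : Type} (A B : T -> Prop) :
  countable_set A -> countable_set B -> countable_set (fun t => A t \/ B t).
Proof.
  intros [s1 H1] [s2 H2].
  exists (fun n => if Nat.even n then s1 (Nat.div2 n) else s2 (Nat.div2 n)).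
  intros t [Ht|Ht].
  - destruct (H1 t Ht) as [m Hm]. exists (2 * m)%nat.
    rewrite Nat.even_mul, Nat.div2_double. exact Hm.
  - destruct (H2 t Ht) as [m Hm]. exists (S (2 * m))%nat.
    rewrite Nat.even_succ, Nat.odd_mul, Nat.div2_succ_double. exact Hm.
Qed.

Lemma countable_sub {T : Type} (A B : T -> Prop) :
  (forall t, A t -> B t) -> countable_set B -> countable_set A.
Proof. intros H [s Hs]. exists s. intros t Ht. exact (Hs t (H t Ht)). Qed.

Lemma sigma_zero_proof {J : Type} (E : J -> tvs) :
  countable_set (supp (fun j => tv_zero (E j))).
Proof. exists (fun _ => None). intros t Ht. exfalso. apply Ht. reflexivity. Qed.

Lemma sigma_add_proof {J : Type} (E : J -> tvs) (x y : sigma_product E) :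
  countable_set (supp (fun j => tv_add (E j) (proj1_sig x j) (proj1_sig y j))).
Proof.
  destruct x as [x hx], y as [y hy]; simpl.
  apply (countable_sub _ (fun t => supp x t \/ supp y t)).
  - intros j Hj. unfold supp in *; cbv beta in *.
    destruct (classic (x j = tv_zero (E j))) as [Hx|Hx]; [|now left].
    destruct (classic (y j = tv_zero (E j))) as [Hy|Hy]; [|now right].
    exfalso. apply Hj. rewrite Hx, Hy. apply (vs_add0 _ _ _ _ (tvs_vs _ _ _ _ _ (tv_ax (E j)))).
  - apply countable_union; assumption.
Qed.

Lemma sigma_opp_proof {J : Type} (E : J -> tvs) (x : sigma_product E) :
  countable_set (supp (fun j => tv_opp (E j) (proj1_sig x j))).
Proof.
  destruct x as [x hx]; simpl.
  apply (countable_sub _ (supp x)); [|exact hx].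
  intros j Hj Hx. unfold supp in *; cbv beta in *. apply Hj. rewrite Hx. apply vs_opp0.
Qed.

Lemma sigma_scale_proof {J : Type} (E : J -> tvs) (a : R) (x : sigma_product E) :
  countable_set (supp (fun j => tv_scale (E j) a (proj1_sig x j))).
Proof.
  destruct x as [x hx]; simpl.
  apply (countable_sub _ (supp x)); [|exact hx].
  intros j Hj Hx. unfold supp in *; cbv beta in *. apply Hj. rewrite Hx. apply vs_scale0.
Qed.

Definition sigma_zero {J : Type} (E : J -> tvs) : sigma_product E :=
  exist (fun z : forall j, E j => countable_set (supp z)) (fun j => tv_zero (E j)) (sigma_zero_proof E).
Definition sigma_add {J : Type} (E : J -> tvs) (x y : sigma_product E) : sigma_product E :=
  exist (fun z : forall j, E j => countable_set (supp z))
    (fun j => tv_add (E j) (proj1_sig x j) (proj1_sig y j)) (sigma_add_proof E x y).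
Definition sigma_opp {J : Type} (E : J -> tvs) (x : sigma_product E) : sigma_product E :=
  exist (fun z : forall j, E j => countable_set (supp z))
    (fun j => tv_opp (E j) (proj1_sig x j)) (sigma_opp_proof E x).
Definition sigma_scale {J : Type} (E : J -> tvs) (a : R) (x : sigma_product E) : sigma_product E :=
  exist (fun z : forall j, E j => countable_set (supp z))
    (fun j => tv_scale (E j) a (proj1_sig x j)) (sigma_scale_proof E a x).

From Stdlib Require Import Reals List Lra Lia Classical ClassicalEpsilon FunctionalExtensionality PropExtensionality ProofIrrelevance.
From Stdlib Require Cantor.
Open Scope R_scope.

(* Fix complete invariant metrics [d_j] on the factors. A basic open set of the Sigma-product
   constrains only finitely many coordinates, while each point has countable support.
   Baire: a nested sequence of "balls", each bounding finitely many coordinates with radii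
   halving at every step, has coordinatewise Cauchy centres, and their coordinatewise limit is
   supported on the countably many coordinates ever used. Fréchet–Urysohn: a diagonal sequence
   controls, at step k, the first k+1 support coordinates of the target and of the earlier
   terms. A countable cn-network at 0 would, via Baire category, attach to every coordinate [j]
   a finite set of coordinates containing [j], drawn from a countable stock; this contradicts
   the uncountability of [J]. Metrizability fails since metric spaces have countable
   cn-character. *)

Lemma functional_choice_dep {A : Type} {B : A -> Type} (P : forall a, B a -> Prop) :
  (forall a, exists b, P a b) -> exists f : forall a, B a, forall a, P a (f a).
Proof.
  intros H. exists (fun a => proj1_sig (constructive_indefinite_description _ (H a))).
  intros a. exact (proj2_sig (constructive_indefinite_description _ (H a))).
Qed.

Lemma list_choice {J : Type} {A : J -> Type} (a0 : forall j, A j) (P : forall j, A j -> Prop)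
  (l : list J) :
  (forall j, In j l -> exists b, P j b) -> exists f : forall j, A j, forall j, In j l -> P j (f j).
Proof.
  intros H. apply (functional_choice_dep (fun j b => In j l -> P j b)). intros j.
  destruct (classic (In j l)) as [h|h].
  - destruct (H j h) as [b Hb]. exists b. auto.
  - exists (a0 j). tauto.
Qed.

Lemma list_min_pos {J : Type} (f : J -> R) (l : list J) (b : R) :
  0 < b -> (forall j, In j l -> 0 < f j) ->
  exists r, 0 < r /\ r <= b /\ forall j, In j l -> r <= f j.
Proof.
  intros Hb. induction l as [|a l IH]; intros H.
  - exists b. split; [lra|]. split; [lra|]. intros j [].
  - destruct IH as [r [Hr [Hrb Hrl]]]. { intros j Hj. apply H. right. exact Hj. }
    exists (Rmin (f a) r). pose proof (Rmin_l (f a) r). pose proof (Rmin_r (f a) r).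
    split; [apply Rmin_glb_lt; auto; apply H; left; reflexivity|]. split; [lra|].
    intros j [<-|Hj]; [lra|]. specialize (Hrl j Hj). lra.
Qed.

Lemma eventually_forall_list {J : Type} (P : J -> nat -> Prop) (l : list J) :
  (forall j, In j l -> exists K, forall k, (K <= k)%nat -> P j k) ->
  exists K, forall k, (K <= k)%nat -> forall j, In j l -> P j k.
Proof.
  induction l as [|a l IH]; intros H.
  - exists 0%nat. intros k _ j [].
  - destruct (H a (or_introl eq_refl)) as [K1 H1].
    destruct IH as [K2 H2]. { intros j Hj. apply H. right; auto. }
    exists (Nat.max K1 K2). intros k Hk j [<-|Hj].
    + apply H1. lia.
    + apply H2; auto. lia.
Qed.

Lemma le_epsilon_R (a b : R) : (forall e, 0 < e -> a < b + e) -> a <= b.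
Proof.
  intros H. destruct (Rle_or_lt a b) as [h|h]; auto.
  specialize (H ((a - b)/2)). lra.
Qed.

Lemma inv_succ_pos (k : nat) : 0 < / (INR k + 1).
Proof. apply Rinv_0_lt_compat. pose proof (pos_INR k). lra. Qed.

Lemma inv_succ_eventually_lt (e : R) :
  0 < e -> exists K, forall k, (K <= k)%nat -> / (INR k + 1) < e.
Proof.
  intros He. destruct (INR_unbounded (/ e)) as [n Hn]. exists n. intros k Hk.
  apply le_INR in Hk. pose proof (pos_INR n).
  rewrite <- (Rinv_inv e). apply Rinv_lt_contravar.
  - apply Rmult_lt_0_compat. apply Rinv_0_lt_compat; auto. lra.
  - lra.
Qed.

Lemma countable_list_union {J : Type} (L : nat -> list J) :
  countable_set (fun j => exists m, In j (L m)).
Proof.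
  exists (fun p => let (m, i) := Cantor.of_nat p in nth_error (L m) i).
  intros j [m Hm]. destruct (In_nth_error _ _ Hm) as [i Hi].
  exists (Cantor.to_nat (m, i)). rewrite Cantor.cancel_of_to. exact Hi.
Qed.

(* Choosing one list per index [m] would cover [J] by countably many finite lists. *)
Lemma uncountable_escapes_lists {J : Type} (Good : nat -> list J -> Prop) :
  ~ countable_set (fun _ : J => True) ->
  ~ (forall j, exists m, (exists l, Good m l) /\ forall l, Good m l -> In j l).
Proof.
  intros hJ H.
  destruct (functional_choice_dep (fun m (l : list J) => (exists l', Good m l') -> Good m l))
    as [lm Hlm].
  { intros m. destruct (classic (exists l', Good m l')) as [[l' h]|h].
    - exists l'. auto.
    - exists nil. tauto. }
  apply hJ. apply (countable_sub _ (fun j => exists m, In j (lm m))); [|apply countable_list_union].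
  intros j _. destruct (H j) as [m [e h]]. exists m. apply h, Hlm, e.
Qed.

Definition adherent {X : Type} (op : (X -> Prop) -> Prop) (A : X -> Prop) (x : X) : Prop :=
  forall U, op U -> U x -> exists a, U a /\ A a.

Lemma baire_cover_adherent_interior {X : Type} (op : (X -> Prop) -> Prop)
  (G : nat -> X -> Prop) (x0 : X) :
  is_topology op -> baire op -> (forall z, exists m, G m z) ->
  exists m U, op U /\ (exists x, U x) /\ forall x, U x -> adherent op (G m) x.
Proof.
  intros [HT [_ HU]] Hb Hcov.
  set (D := fun m z => exists U, (op U /\ forall w, U w -> ~ G m w) /\ U z).
  assert (HD : forall m, op (D m)) by (intros m; apply HU; intros U [h _]; exact h).
  destruct (classic (forall m, dense op (D m))) as [Hd|Hnd].
  - destruct (Hb D (fun m => conj (HD m) (Hd m)) (fun _ => True) HT) as [z [_ Hz]].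
    { exists x0. exact I. }
    destruct (Hcov z) as [m Gz]. destruct (Hz m) as [U [[_ HUG] Uz]].
    exfalso. exact (HUG z Uz Gz).
  - apply not_all_ex_not in Hnd. destruct Hnd as [m Hm].
    unfold dense in Hm.
    apply not_all_ex_not in Hm. destruct Hm as [U Hm].
    apply imply_to_and in Hm. destruct Hm as [HUo Hm].
    apply imply_to_and in Hm. destruct Hm as [Hne Hm].
    exists m, U. split; [exact HUo|]. split; [exact Hne|].
    intros x Ux V HV Vx. apply NNPP. intros hV. apply Hm. exists x. split; [exact Ux|].
    exists V. split; [split; [exact HV|]|exact Vx].
    intros w Vw Gw. apply hV. exists w. auto.
Qed.

Lemma metric_refl {X : Type} (d : X -> X -> R) (x : X) : is_metric d -> d x x = 0.
Proof. intros [_ [H _]]. apply H. reflexivity. Qed.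

Lemma metric_pos {X : Type} (d : X -> X -> R) (x y : X) : is_metric d -> x <> y -> 0 < d x y.
Proof.
  intros [H0 [H1 _]] Hxy. destruct (H0 x y) as [h|h]; auto.
  exfalso. apply Hxy. apply H1. auto.
Qed.

Lemma metric_ball_open {X : Type} (op : (X -> Prop) -> Prop) (d : X -> X -> R) (x : X) (r : R) :
  is_metric d -> metric_induces op d -> op (fun y => d x y < r).
Proof.
  intros [_ [_ [_ Htri]]] Hi. apply Hi. intros y Hy.
  exists (r - d x y). split; [lra|]. intros z Hz. pose proof (Htri x y z). lra.
Qed.

(* A metric space is first countable, and a countable local base is a cn-network. *)
Lemma metrizable_countable_cn_character {X : Type} (op : (X -> Prop) -> Prop) :
  metrizable op -> countable_cn_character op.
Proof.
  intros [d [Hd Hi]] x.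
  exists (fun N => exists m, N = fun y => d x y < / (INR m + 1)). split.
  - exists (fun m => Some (fun y => d x y < / (INR m + 1))). intros N [m ->]. exists m. reflexivity.
  - intros O [U [HU [Ux UO]]].
    destruct (proj1 (Hi U) HU x Ux) as [e [He HeU]].
    destruct (inv_succ_eventually_lt e He) as [m Hm]. specialize (Hm m (le_n m)).
    set (B := fun y => d x y < / (INR m + 1)).
    assert (Bx : B x) by (unfold B; rewrite metric_refl by exact Hd; apply inv_succ_pos).
    exists B. split; [apply metric_ball_open; assumption|]. split; [exact Bx|].
    intros y By. exists B. split; [exists m; reflexivity|]. split; [exact Bx|].
    split; [|exact By]. intros w Bw. apply UO, HeU. unfold B in Bw. lra.
Qed.

Lemma tvs_vsE (X : tvs) : is_vector_space (tv_zero X) (tv_add X) (tv_opp X) (tv_scale X).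
Proof. exact (tvs_vs _ _ _ _ _ (tv_ax X)). Qed.

Lemma tvs_topE (X : tvs) : is_topology (tv_open X).
Proof. exact (tvs_top _ _ _ _ _ (tv_ax X)). Qed.

Lemma tvs_open_imply (X : tvs) (P : Prop) (A : X -> Prop) :
  (P -> tv_open X A) -> tv_open X (fun y => P -> A y).
Proof.
  intros H. destruct (tvs_topE X) as [HT _]. destruct (classic P) as [p|np].
  - assert (HA : A = fun y => P -> A y).
    { apply functional_extensionality. intros y. apply propositional_extensionality. tauto. }
    rewrite <- HA. auto.
  - assert (HA : (fun _ : X => True) = fun y => P -> A y).
    { apply functional_extensionality. intros y. apply propositional_extensionality. tauto. }
    rewrite <- HA. exact HT.
Qed.

Lemma tvs_scale0 (X : tvs) (x : X) : tv_scale X 0 x = tv_zero X.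
Proof.
  destruct (tvs_vsE X) as [A _ Z N _ _ _ Dl].
  assert (H : tv_scale X 0 x = tv_add X (tv_scale X 0 x) (tv_scale X 0 x))
    by (rewrite <- Dl, Rplus_0_r; reflexivity).
  remember (tv_scale X 0 x) as s eqn:Hs. clear Hs.
  transitivity (tv_add X s (tv_add X s (tv_opp X s))).
  - rewrite N, Z. reflexivity.
  - rewrite A, <- H, N. reflexivity.
Qed.

Lemma tvs_scale_inv_succ (X : tvs) (k : nat) (z : X) :
  tv_scale X (INR k + 1) (tv_scale X (/ (INR k + 1)) z) = z.
Proof.
  destruct (tvs_vsE X) as [_ _ _ _ SA S1 _ _].
  rewrite SA, Rinv_r; [apply S1|]. pose proof (pos_INR k). lra.
Qed.

Lemma tvs_absorbing (X : tvs) (U : X -> Prop) (z : X) :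
  tv_open X U -> U (tv_zero X) -> exists k, U (tv_scale X (/ (INR k + 1)) z).
Proof.
  intros HU U0.
  destruct (tvs_scale_cont _ _ _ _ _ (tv_ax X) 0 z U HU) as [d [V [Hd [_ [Vz HV]]]]].
  { rewrite tvs_scale0. exact U0. }
  destruct (inv_succ_eventually_lt d Hd) as [k Hk]. exists k. apply HV; [|exact Vz].
  rewrite Rminus_0_r, Rabs_right; [apply Hk; lia|]. left. apply inv_succ_pos.
Qed.

Lemma cn_network_absorbing (X : tvs) (NN : (X -> Prop) -> Prop) (O : X -> Prop) (z : X) :
  cn_network (tv_open X) (tv_zero X) NN -> tv_open X O -> O (tv_zero X) ->
  exists N k, NN N /\ (forall w, N w -> O w) /\ N (tv_scale X (/ (INR k + 1)) z).
Proof.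
  intros Hnet HO O0.
  destruct (Hnet O) as [U [HU [U0 UW]]]. { exists O. auto. }
  destruct (tvs_absorbing X U z HU U0) as [k Uk].
  destruct (UW _ Uk) as [N [HN [_ [NO Nz]]]]. exists N, k. auto.
Qed.

(** * The Sigma-product *)

Definition fupdate {J : Type} (P : J -> Type) (j : J) (a : P j) (b : forall k, P k) :
  forall k, P k :=
  fun k => match excluded_middle_informative (j = k) with
           | left H => eq_rect j P a k H | right _ => b k end.

Lemma fupdate_same {J : Type} (P : J -> Type) j a b : fupdate P j a b j = a.
Proof.
  unfold fupdate. destruct excluded_middle_informative as [H|H].
  - rewrite (proof_irrelevance _ H eq_refl). reflexivity.
  - exfalso; auto.
Qed.

Lemma fupdate_other {J : Type} (P : J -> Type) j a b k : j <> k -> fupdate P j a b k = b k.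
Proof.
  intros h. unfold fupdate. destruct excluded_middle_informative as [H|H]; [contradiction|reflexivity].
Qed.

Section SigmaProduct.

Context {J : Type} (E : J -> tvs).

Lemma sigma_eq (a b : sigma_product E) : proj1_sig a = proj1_sig b -> a = b.
Proof.
  destruct a as [a ha], b as [b hb]; simpl. intros ->. f_equal. apply proof_irrelevance.
Qed.

Definition cyl (l : list J) (V : forall j, E j -> Prop) : sigma_product E -> Prop :=
  fun w => forall j, In j l -> V j (proj1_sig w j).

Lemma cyl_open l V : (forall j, In j l -> tv_open (E j) (V j)) -> sigma_open E (cyl l V).
Proof.
  intros H. exists (fun x => forall j, In j l -> V j (x j)). split.
  - intros x Hx. exists l, V. split; auto.
  - intros z. unfold cyl. tauto.
Qed.

Lemma sigma_open_basic W z :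
  sigma_open E W -> W z ->
  exists l V, (forall j, In j l -> tv_open (E j) (V j) /\ V j (proj1_sig z j)) /\
    forall w, cyl l V w -> W w.
Proof.
  intros [O [HO HW]] Hz. apply HW in Hz. destruct (HO _ Hz) as [l [V [H1 H2]]].
  exists l, V. split; auto. intros w Hw. apply HW. apply H2. exact Hw.
Qed.

Lemma coord_open j (W : E j -> Prop) :
  tv_open (E j) W -> sigma_open E (fun w => W (proj1_sig w j)).
Proof.
  intros HW. exists (fun x => W (x j)). split; [|intros z; tauto].
  intros x Wx. exists (j :: nil), (fupdate (fun k => E k -> Prop) j W (fun _ _ => True)). split.
  - intros k [<-|[]]. rewrite fupdate_same. auto.
  - intros y Hy. specialize (Hy j (or_introl eq_refl)). rewrite fupdate_same in Hy. exact Hy.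
Qed.

Lemma prod_open_inter O1 O2 :
  prod_open E O1 -> prod_open E O2 -> prod_open E (fun x => O1 x /\ O2 x).
Proof.
  intros H1 H2 x [x1 x2].
  destruct (H1 x x1) as [l1 [V1 [A1 B1]]]. destruct (H2 x x2) as [l2 [V2 [A2 B2]]].
  exists (l1 ++ l2), (fun j y => (In j l1 -> V1 j y) /\ (In j l2 -> V2 j y)). split.
  - intros j Hj. split.
    + destruct (tvs_topE (E j)) as [_ [HI _]].
      apply HI; apply tvs_open_imply; intros h; [apply A1|apply A2]; exact h.
    + split; intros h; [apply A1|apply A2]; exact h.
  - intros y Hy. split; [apply B1|apply B2]; intros j Hj; apply (Hy j); auto using in_or_app.
Qed.

Lemma sigma_topology : is_topology (sigma_open E).
Proof.
  split; [|split].
  - exists (fun _ => True). split; [|tauto].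
    intros x _. exists nil, (fun _ _ => True). simpl. split; [tauto|auto].
  - intros U V [O1 [H1 E1]] [O2 [H2 E2]]. exists (fun x => O1 x /\ O2 x). split.
    + apply prod_open_inter; auto.
    + intros z. rewrite E1, E2. tauto.
  - intros F HF.
    exists (fun x => exists W O, F W /\ prod_open E O /\
                      (forall z, W z <-> O (proj1_sig z)) /\ O x).
    split.
    + intros x [W [O [FW [HO [HWO Ox]]]]]. destruct (HO x Ox) as [l [V [A B]]].
      exists l, V. split; auto. intros y Hy. exists W, O. auto.
    + intros z. split.
      * intros [W [FW Wz]]. destruct (HF W FW) as [O [HO HWO]].
        exists W, O. repeat split; auto; apply HWO; assumption.
      * intros [W [O [FW [HO [HWO Oz]]]]]. exists W. split; auto. apply HWO; exact Oz.
Qed.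

Lemma sigma_vector_space :
  is_vector_space (sigma_zero E) (sigma_add E) (sigma_opp E) (sigma_scale E).
Proof.
  split; intros; apply sigma_eq; simpl; apply functional_extensionality_dep; intros j.
  - apply (vs_addA _ _ _ _ (tvs_vsE (E j))).
  - apply (vs_addC _ _ _ _ (tvs_vsE (E j))).
  - apply (vs_add0 _ _ _ _ (tvs_vsE (E j))).
  - apply (vs_addN _ _ _ _ (tvs_vsE (E j))).
  - apply (vs_scaleA _ _ _ _ (tvs_vsE (E j))).
  - apply (vs_scale1 _ _ _ _ (tvs_vsE (E j))).
  - apply (vs_scaleDr _ _ _ _ (tvs_vsE (E j))).
  - apply (vs_scaleDl _ _ _ _ (tvs_vsE (E j))).
Qed.

Lemma sigma_add_continuous : add_continuous (sigma_open E) (sigma_add E).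
Proof.
  intros x y W HW Wxy.
  destruct (sigma_open_basic W _ HW Wxy) as [l [V [H1 H2]]].
  destruct (list_choice (fun j => (fun _ : E j => True, fun _ : E j => True))
    (fun j (p : (E j -> Prop) * (E j -> Prop)) =>
       tv_open (E j) (fst p) /\ tv_open (E j) (snd p) /\
       fst p (proj1_sig x j) /\ snd p (proj1_sig y j) /\
       forall a b, fst p a -> snd p b -> V j (tv_add (E j) a b)) l) as [f Hf].
  { intros j Hj. destruct (H1 j Hj) as [o v].
    destruct (tvs_add_cont _ _ _ _ _ (tv_ax (E j)) _ _ _ o v) as [U [U' HU]].
    exists (U, U'). exact HU. }
  exists (cyl l (fun j => fst (f j))), (cyl l (fun j => snd (f j))).
  split; [apply cyl_open; intros; apply Hf; auto|].
  split; [apply cyl_open; intros; apply Hf; auto|].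
  split; [intros j Hj; apply Hf; auto|].
  split; [intros j Hj; apply Hf; auto|].
  intros a b Ha Hb. apply H2. intros j Hj. apply (Hf j Hj); auto.
Qed.

Lemma sigma_scale_continuous : scale_continuous (sigma_open E) (sigma_scale E).
Proof.
  intros t x W HW Wtx.
  destruct (sigma_open_basic W _ HW Wtx) as [l [V [H1 H2]]].
  destruct (list_choice (fun j => (1, fun _ : E j => True))
    (fun j (p : R * (E j -> Prop)) =>
       0 < fst p /\ tv_open (E j) (snd p) /\ snd p (proj1_sig x j) /\
       forall s b, Rabs (s - t) < fst p -> snd p b -> V j (tv_scale (E j) s b)) l) as [f Hf].
  { intros j Hj. destruct (H1 j Hj) as [o v].
    destruct (tvs_scale_cont _ _ _ _ _ (tv_ax (E j)) _ _ _ o v) as [d [U HU]].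
    exists (d, U). exact HU. }
  destruct (list_min_pos (fun j => fst (f j)) l 1) as [d [Hd [_ Hdl]]];
    [lra|intros j Hj; apply Hf; auto|].
  exists d, (cyl l (fun j => snd (f j))).
  split; [exact Hd|].
  split; [apply cyl_open; intros; apply Hf; auto|].
  split; [intros j Hj; apply Hf; auto|].
  intros s b Hs Hb. apply H2. intros j Hj. apply (Hf j Hj); auto.
  specialize (Hdl j Hj). simpl in Hdl. lra.
Qed.

Lemma sigma_is_tvs :
  is_tvs (sigma_zero E) (sigma_add E) (sigma_opp E) (sigma_scale E) (sigma_open E).
Proof.
  split; [apply sigma_vector_space|apply sigma_topology|apply sigma_add_continuous|
          apply sigma_scale_continuous].
Qed.

Definition sigma_tvs : tvs :=
  Build_tvs (sigma_product E) (sigma_zero E) (sigma_add E) (sigma_opp E) (sigma_scale E)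
    (sigma_open E) sigma_is_tvs.

Lemma sigma_single_proof j (v : E j) :
  countable_set (supp (fupdate E j v (fun k => tv_zero (E k)))).
Proof.
  exists (fun _ => Some j). intros t Ht. exists 0%nat.
  destruct (classic (j = t)) as [->|h]; [reflexivity|].
  exfalso. apply Ht. exact (fupdate_other E j v (fun k => tv_zero (E k)) t h).
Qed.

Definition sigma_single j (v : E j) : sigma_product E :=
  exist (fun z : forall k, E k => countable_set (supp z)) _ (sigma_single_proof j v).

Definition vanishes_on (l : list J) (y : sigma_product E) : Prop :=
  forall i, In i l -> proj1_sig y i = tv_zero (E i).

End SigmaProduct.

(** * Baire property *)

Definition complete_invariant_metric (X : tvs) (d : X -> X -> R) : Prop :=
  is_metric d /\ metric_induces (tv_open X) d /\
    (forall x y w, d (tv_add X x w) (tv_add X y w) = d x y) /\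
    (forall u, cauchy_seq d u -> exists l, metric_conv d u l).

Lemma cauchy_of_geometric_bound {X : Type} (d : X -> X -> R) (u : nat -> X) (r0 : R) (m0 : nat) :
  is_metric d -> 0 < r0 ->
  (forall m k, (m0 <= m)%nat -> (m <= k)%nat -> d (u m) (u k) <= r0 * (/ 2) ^ m) ->
  cauchy_seq d u.
Proof.
  intros [_ [_ [Hsym Htri]]] Hr0 H e He.
  destruct (pow_lt_1_zero (/ 2)) with (y := e / (2 * r0)) as [N1 HN1].
  { rewrite Rabs_right; lra. }
  { apply Rdiv_lt_0_compat; lra. }
  exists (Nat.max m0 N1). intros a b Ha Hb. set (N := Nat.max m0 N1) in *.
  specialize (HN1 N ltac:(lia)). rewrite Rabs_right in HN1 by (left; apply pow_lt; lra).
  assert (Hsmall : r0 * (/ 2) ^ N < e / 2).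
  { apply (Rmult_lt_compat_l r0) in HN1; [|lra].
    replace (r0 * (e / (2 * r0))) with (e / 2) in HN1 by (field; lra). exact HN1. }
  pose proof (H N a ltac:(lia) Ha). pose proof (H N b ltac:(lia) Hb).
  pose proof (Htri (u a) (u N) (u b)). pose proof (Hsym (u a) (u N)). lra.
Qed.

Section SigmaMetric.

Context {J : Type} (E : J -> tvs) (dd : forall j, E j -> E j -> R).
Hypothesis Hdd : forall j, complete_invariant_metric (E j) (dd j).

Lemma dd_metric j : is_metric (dd j).
Proof. apply Hdd. Qed.

Lemma dd_ball_open j x r : tv_open (E j) (fun y => dd j x y < r).
Proof. apply metric_ball_open; apply Hdd. Qed.

Lemma dd_open_ball j (U : E j -> Prop) x :
  tv_open (E j) U -> U x -> exists e, 0 < e /\ forall y, dd j x y < e -> U y.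
Proof. intros HU Ux. destruct (Hdd j) as [_ [Hi _]]. apply Hi; auto. Qed.

(* A ball controls only the finitely many coordinates in [coords]. *)
Record ball_data := { center : sigma_product E; coords : list J; radius : R }.

Definition cball (b : ball_data) (z : sigma_product E) : Prop :=
  forall j, In j (coords b) -> dd j (proj1_sig (center b) j) (proj1_sig z j) <= radius b.

Definition oball (b : ball_data) : sigma_product E -> Prop :=
  cyl E (coords b) (fun j y => dd j (proj1_sig (center b) j) y < radius b).

Lemma oball_open b : sigma_open E (oball b).
Proof. apply cyl_open. intros j _. apply dd_ball_open. Qed.

Lemma oball_center b : 0 < radius b -> oball b (center b).
Proof. intros Hr j _. rewrite metric_refl by apply dd_metric. exact Hr. Qed.

Lemma cball_center b : 0 <= radius b -> cball b (center b).
Proof. intros Hr j _. rewrite metric_refl by apply dd_metric. exact Hr. Qed.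

Lemma sigma_open_cball G x r0 :
  sigma_open E G -> G x -> 0 < r0 ->
  exists F r, 0 < r /\ r <= r0 /\ forall z, cball (Build_ball_data x F r) z -> G z.
Proof.
  intros HG Gx Hr0. destruct (sigma_open_basic E G x HG Gx) as [l [V [H1 H2]]].
  destruct (list_choice (fun _ => 1)
    (fun j e => 0 < e /\ forall y, dd j (proj1_sig x j) y < e -> V j y) l) as [f Hf].
  { intros j Hj. destruct (H1 j Hj) as [o v]. apply (dd_open_ball _ _ _ o v). }
  destruct (list_min_pos (fun j => f j / 2) l r0) as [r [Hr [Hrr0 Hrl]]];
    [exact Hr0|intros j Hj; destruct (Hf j Hj); lra|].
  exists l, r. split; [exact Hr|]. split; [exact Hrr0|].
  intros z Hz. apply H2. intros j Hj. apply (Hf j Hj).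
  specialize (Hz j Hj). specialize (Hrl j Hj). simpl in *. destruct (Hf j Hj). lra.
Qed.

(* The limit is taken coordinatewise; off the countably many listed coordinates it is 0. *)
Lemma sigma_limit_exists (xs : nat -> sigma_product E) (Fs : nat -> list J) :
  (forall j m, In j (Fs m) -> cauchy_seq (dd j) (fun k => proj1_sig (xs k) j)) ->
  exists y : sigma_product E, forall j m, In j (Fs m) ->
    metric_conv (dd j) (fun k => proj1_sig (xs k) j) (proj1_sig y j).
Proof.
  intros Hcau.
  pose (yfun := fun j => match excluded_middle_informative (exists m, In j (Fs m)) with
                 | left _ => epsilon (inhabits (tv_zero (E j)))
                               (metric_conv (dd j) (fun k => proj1_sig (xs k) j))
                 | right _ => tv_zero (E j) end).
  assert (Hsupp : countable_set (supp yfun)).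
  { apply (countable_sub _ (fun j => exists m, In j (Fs m))); [|apply countable_list_union].
    intros j Hj. unfold supp, yfun in Hj. destruct excluded_middle_informative; tauto. }
  exists (exist _ yfun Hsupp). intros j m Hj. simpl. unfold yfun.
  destruct excluded_middle_informative as [h|h]; [|exfalso; eauto].
  apply epsilon_spec. apply (Hdd j). exact (Hcau j m Hj).
Qed.

Lemma sigma_nested_cballs (bs : nat -> ball_data) :
  (forall n, 0 < radius (bs n) /\ radius (bs (S n)) <= radius (bs n) / 2) ->
  (forall n, incl (coords (bs n)) (coords (bs (S n)))) ->
  (forall n z, cball (bs (S n)) z -> cball (bs n) z) ->
  exists y, forall n, cball (bs n) y.
Proof.
  intros Hr Hinc Hnest.
  assert (coords_mono : forall m k, (m <= k)%nat -> incl (coords (bs m)) (coords (bs k))).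
  { intros m k Hmk. induction Hmk; [apply incl_refl|eapply incl_tran; eauto]. }
  assert (cball_mono : forall m k z, (m <= k)%nat -> cball (bs k) z -> cball (bs m) z).
  { intros m k z Hmk. induction Hmk; auto. }
  assert (radius_bound : forall n, radius (bs n) <= radius (bs 0%nat) * (/ 2) ^ n).
  { induction n; simpl; [lra|]. destruct (Hr n). lra. }
  assert (Hdist : forall m k j, (m <= k)%nat -> In j (coords (bs m)) ->
    dd j (proj1_sig (center (bs m)) j) (proj1_sig (center (bs k)) j) <= radius (bs m)).
  { intros m k j Hmk Hj. apply (cball_mono m k _ Hmk); [|exact Hj].
    apply cball_center. left. apply Hr. }
  destruct (sigma_limit_exists (fun n => center (bs n)) (fun n => coords (bs n))) as [y Hy].
  { intros j m Hj. apply (cauchy_of_geometric_bound _ _ (radius (bs 0%nat)) m (dd_metric j));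
      [apply Hr|].
    intros m' k Hm' Hk. eapply Rle_trans; [|apply radius_bound].
    apply Hdist; [exact Hk|]. apply (coords_mono m m'); auto. }
  exists y. intros n j Hj. apply le_epsilon_R. intros e He.
  destruct (Hy j n Hj e He) as [N HN]. specialize (HN (Nat.max N n) ltac:(lia)).
  pose proof (Hdist n (Nat.max N n) j ltac:(lia) Hj).
  destruct (dd_metric j) as [_ [_ [_ Htri]]].
  pose proof (Htri (proj1_sig (center (bs n)) j) (proj1_sig (center (bs (Nat.max N n))) j)
    (proj1_sig y j)). simpl in *. lra.
Qed.

Definition refines (D : sigma_product E -> Prop) (b b' : ball_data) : Prop :=
  0 < radius b' /\ radius b' <= radius b / 2 /\ incl (coords b) (coords b') /\
  forall z, cball b' z -> D z /\ oball b z.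

Lemma refines_exists D b :
  sigma_open E D -> dense (sigma_open E) D -> 0 < radius b -> exists b', refines D b b'.
Proof.
  intros HDo HDd Hr.
  destruct (HDd (oball b) (oball_open b)) as [x [Dx Bx]]; [exists (center b); apply oball_center, Hr|].
  destruct (sigma_open_cball (fun z => D z /\ oball b z) x (radius b / 2)) as [F [r [Hr' [Hrb HF]]]].
  - apply sigma_topology; [exact HDo|apply oball_open].
  - split; assumption.
  - lra.
  - exists (Build_ball_data x (F ++ coords b) r). split; [exact Hr'|]. split; [exact Hrb|]. split.
    + intros j h. apply in_or_app. right. exact h.
    + intros z Hz. apply HF. intros j Hj. apply Hz. apply in_or_app. left. exact Hj.
Qed.

Lemma sigma_baire : baire (sigma_open E).
Proof.
  intros D HD U HU [x0 Ux0].
  destruct (sigma_open_cball U x0 1 HU Ux0 Rlt_0_1) as [F0 [r0 [Hr0 [_ HF0]]]].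
  pose (next := fun n b => epsilon (inhabits b) (refines (D n) b)).
  pose (bs := nat_rect (fun _ => ball_data) (Build_ball_data x0 F0 r0) next).
  assert (Href : forall n, 0 < radius (bs n) /\ refines (D n) (bs n) (bs (S n))).
  { induction n as [|n [_ IH]].
    - split; [exact Hr0|]. simpl. apply epsilon_spec, refines_exists; [apply HD|apply HD|exact Hr0].
    - split; [apply IH|]. simpl. apply epsilon_spec, refines_exists; [apply HD|apply HD|apply IH]. }
  destruct (sigma_nested_cballs bs) as [y Hy].
  - intros n. split; apply Href.
  - intros n. apply Href.
  - intros n z Hz. destruct (Href n) as [_ [_ [_ [_ Hin]]]]. destruct (Hin z Hz) as [_ Hz'].
    intros j Hj. left. apply Hz', Hj.
  - exists y. split; [apply HF0, (Hy 0%nat)|].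
    intros n. destruct (Href n) as [_ [_ [_ [_ Hin]]]]. apply (Hin y (Hy (S n))).
Qed.

(** * Fréchet–Urysohn property *)

Fixpoint somes {A : Type} (l : list (option A)) : list A :=
  match l with nil => nil | Some a :: l' => a :: somes l' | None :: l' => somes l' end.

Lemma in_somes {A : Type} (l : list (option A)) a : In (Some a) l -> In a (somes l).
Proof.
  induction l as [|[b|] l IH]; simpl; auto.
  - intros [h|h]; [left; congruence|right; auto].
  - intros [h|h]; [discriminate|auto].
Qed.

(* [u k] is chosen in [A], within [1/(k+1)] of [x] on the first [k+1] support coordinates of
   [x] and of [u 0], ..., [u (k-1)]. *)
Lemma sigma_diagonal_sequence (A : sigma_product E -> Prop) x :
  adherent (sigma_open E) A x ->
  exists u : nat -> sigma_product E, (forall k, A (u k)) /\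
    forall j, (supp (proj1_sig x) j \/ exists i, supp (proj1_sig (u i)) j) ->
      exists K, forall k, (K <= k)%nat -> dd j (proj1_sig x j) (proj1_sig (u k) j) < / (INR k + 1).
Proof.
  intros Hcl.
  destruct (functional_choice_dep (fun (p : sigma_product E) (s : nat -> option J) =>
     forall t, supp (proj1_sig p) t -> exists n, s n = Some t)) as [en Hen].
  { intros p. exact (proj2_sig p). }
  pose (F := fun L k => flat_map (fun p => somes (map (en p) (seq 0 (S k)))) (x :: L)).
  pose (ball := fun L k => Build_ball_data x (F L k) (/ (INR k + 1))).
  pose (pick := fun L k => epsilon (inhabits x) (fun a => A a /\ oball (ball L k) a)).
  assert (Hpick : forall L k, A (pick L k) /\ oball (ball L k) (pick L k)).
  { intros L k. apply epsilon_spec.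
    destruct (Hcl (oball (ball L k))) as [a [h1 h2]];
      [apply oball_open|apply oball_center, inv_succ_pos|].
    exists a. auto. }
  pose (Ls := nat_rect (fun _ => list (sigma_product E)) nil (fun k L => L ++ (pick L k :: nil))).
  pose (u := fun k => pick (Ls k) k).
  assert (HLs : forall k i, (i < k)%nat -> In (u i) (Ls k)).
  { induction k; intros i Hi; [lia|]. simpl. apply in_or_app.
    destruct (Nat.eq_dec i k) as [->|h]; [right; left; reflexivity|left; apply IHk; lia]. }
  assert (HF : forall L k p t j, In p (x :: L) -> en p t = Some j -> (t <= k)%nat -> In j (F L k)).
  { intros L k p t j Hp He Ht. apply in_flat_map. exists p. split; auto.
    apply in_somes. rewrite <- He. apply in_map, in_seq. lia. }
  exists u. split; [intros k; apply Hpick|].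
  intros j Hsupp.
  assert (HK : exists K, forall k, (K <= k)%nat -> In j (F (Ls k) k)).
  { destruct Hsupp as [Hx|[i Hi]].
    - destruct (Hen x j Hx) as [t Ht]. exists t. intros k Hk.
      apply (HF _ k x t j); auto. left; auto.
    - destruct (Hen (u i) j Hi) as [t Ht]. exists (Nat.max (S i) t). intros k Hk.
      apply (HF _ k (u i) t j); auto; [|lia]. right. apply HLs. lia. }
  destruct HK as [K HK]. exists K. intros k Hk.
  destruct (Hpick (Ls k) k) as [_ h]. exact (h j (HK k Hk)).
Qed.

Lemma sigma_frechet_urysohn : frechet_urysohn (sigma_open E).
Proof.
  intros A x Hcl. destruct (sigma_diagonal_sequence A x Hcl) as [u [HA Hu]].
  exists u. split; [exact HA|].
  intros U HU Ux. destruct (sigma_open_basic E U x HU Ux) as [l [V [H1 H2]]].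
  destruct (eventually_forall_list (fun j k => V j (proj1_sig (u k) j)) l) as [K HK].
  2:{ exists K. intros n Hn. apply H2. intros j Hj. apply HK; auto. }
  intros j Hj. destruct (H1 j Hj) as [Vo Vx].
  destruct (classic (supp (proj1_sig x) j \/ exists i, supp (proj1_sig (u i)) j))
    as [Hsupp|Hsupp].
  - destruct (Hu j Hsupp) as [K0 HK0].
    destruct (dd_open_ball j (V j) _ Vo Vx) as [e [He HV]].
    destruct (inv_succ_eventually_lt e He) as [K1 HK1].
    exists (Nat.max K0 K1). intros k Hk. apply HV.
    specialize (HK0 k ltac:(lia)). specialize (HK1 k ltac:(lia)). lra.
  - exists 0%nat. intros k _. unfold supp in Hsupp.
    assert (Hx : proj1_sig x j = tv_zero (E j))
      by (apply NNPP; intros h; apply Hsupp; left; exact h).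
    assert (Hk : proj1_sig (u k) j = tv_zero (E j))
      by (apply NNPP; intros h; apply Hsupp; right; exists k; exact h).
    rewrite Hk, <- Hx. exact Vx.
Qed.

(** * The cn-character *)

Lemma adherent_mono {X : Type} (op : (X -> Prop) -> Prop) (A B : X -> Prop) x :
  (forall a, A a -> B a) -> adherent op A x -> adherent op B x.
Proof. intros HAB Hx U HU Ux. destruct (Hx U HU Ux) as [a [Ua Aa]]. eauto. Qed.

Lemma dd_translate_le j (a v : E j) :
  dd j (tv_zero (E j)) v <= dd j (tv_zero (E j)) a + dd j (tv_zero (E j)) (tv_add (E j) a v).
Proof.
  destruct (Hdd j) as [[_ [_ [Hsym Htri]]] [_ [Hinv _]]].
  destruct (tvs_vsE (E j)) as [_ HC H0 _ _ _ _ _].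
  rewrite <- (Hinv (tv_zero (E j)) v a), (HC (tv_zero (E j)) a), H0, (HC v a).
  pose proof (Htri a (tv_zero (E j)) (tv_add (E j) a v)). pose proof (Hsym a (tv_zero (E j))). lra.
Qed.

Lemma adherent_coord_ball_le j (c r : R) (A : sigma_product E -> Prop) q :
  (forall g, A g -> dd j (tv_zero (E j)) (tv_scale (E j) (/ c) (proj1_sig g j)) < r) ->
  adherent (sigma_open E) A q ->
  dd j (tv_zero (E j)) (tv_scale (E j) (/ c) (proj1_sig q j)) <= r.
Proof.
  intros HA Hq. apply le_epsilon_R. intros e He.
  set (a := tv_scale (E j) (/ c) (proj1_sig q j)).
  destruct (tvs_scale_cont _ _ _ _ _ (tv_ax (E j)) (/ c) (proj1_sig q j) (fun b => dd j a b < e))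
    as [dlt [V [Hdlt [Vo [Vq HV]]]]].
  { apply dd_ball_open. }
  { unfold a. rewrite metric_refl by apply dd_metric. exact He. }
  destruct (Hq _ (coord_open E j V Vo) Vq) as [g [Vg Ag]].
  assert (Hg := HV (/ c) _ ltac:(rewrite Rminus_diag, Rabs_R0; lra) Vg). specialize (HA g Ag).
  destruct (dd_metric j) as [_ [_ [Hsym Htri]]].
  pose proof (Htri (tv_zero (E j)) (tv_scale (E j) (/ c) (proj1_sig g j)) a).
  pose proof (Hsym a (tv_scale (E j) (/ c) (proj1_sig g j))). lra.
Qed.

(* [m] encodes a pair [(n, k)]; the set consists of the multiples [(k+1) y] of the points [y] of
   the [n]-th set listed by [s]. *)
Definition network_multiples (s : nat -> option (sigma_product E -> Prop)) (m : nat)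
  (z : sigma_product E) : Prop :=
  exists N y, s (fst (Cantor.of_nat m)) = Some N /\ N y /\
    z = sigma_scale E (INR (snd (Cantor.of_nat m)) + 1) y.

(* By absorbency the multiples of the members of the network inside [O] cover the space, so
   by Baire category one of them has a closure with interior. *)
Lemma network_multiples_somewhere_dense NN s O :
  (forall N, NN N -> exists n, s n = Some N) ->
  cn_network (sigma_open E) (sigma_zero E) NN -> sigma_open E O -> O (sigma_zero E) ->
  exists m N l p, s (fst (Cantor.of_nat m)) = Some N /\ (forall w, N w -> O w) /\
    forall y, vanishes_on E l y ->
      adherent (sigma_open E) (network_multiples s m) p /\
      adherent (sigma_open E) (network_multiples s m) (sigma_add E p y).
Proof.
  intros Hs Hnet HO O0.
  set (inO := fun m => exists N, s (fst (Cantor.of_nat m)) = Some N /\ forall w, N w -> O w).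
  destruct (baire_cover_adherent_interior (sigma_open E)
    (fun m z => inO m /\ network_multiples s m z) (sigma_zero E) (sigma_topology E) sigma_baire)
    as [m [U [HU [[p Up] Hadh]]]].
  { intros z.
    destruct (cn_network_absorbing (sigma_tvs E) NN O z Hnet HO O0) as [N [k [HN [NO Nz]]]].
    destruct (Hs N HN) as [n Hn]. exists (Cantor.to_nat (n, k)).
    unfold inO, network_multiples. rewrite Cantor.cancel_of_to. split; [exists N; auto|].
    exists N, (sigma_scale E (/ (INR k + 1)) z). split; [exact Hn|]. split; [exact Nz|].
    symmetry. exact (tvs_scale_inv_succ (sigma_tvs E) k z). }
  destruct (Hadh p Up U HU Up) as [a [_ [[N [HN NO]] _]]].
  destruct (sigma_open_basic E U p HU Up) as [l [V [H1 H2]]].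
  exists m, N, l, p. split; [exact HN|]. split; [exact NO|]. intros y Hy.
  split; apply (adherent_mono _ (fun z => inO m /\ network_multiples s m z));
    try (intros b [_ h]; exact h); apply Hadh; [exact Up|].
  apply H2. intros i Hi. simpl. rewrite (Hy i Hi), (vs_add0 _ _ _ _ (tvs_vsE (E i))).
  apply H1, Hi.
Qed.

(* For a neighbourhood [O] of [0] small along a coordinate [j], the finite set [l] produced
   above must contain [j]; but only countably many such [l] arise. *)
Lemma sigma_not_countable_cn_character :
  (forall j, nonzero_tvs (E j)) -> ~ countable_set (fun _ : J => True) ->
  ~ countable_cn_character (sigma_open E).
Proof.
  intros hnz hJ Hcn. destruct (Hcn (sigma_zero E)) as [NN [[s Hs] Hnet]].
  apply (uncountable_escapes_lists (fun m l => exists p, forall y, vanishes_on E l y ->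
     adherent (sigma_open E) (network_multiples s m) p /\
     adherent (sigma_open E) (network_multiples s m) (sigma_add E p y)) hJ).
  intros j. destruct (hnz j) as [v Hv].
  set (dl := dd j (tv_zero (E j)) v).
  assert (Hdl : 0 < dl) by (apply metric_pos; [apply dd_metric|exact (not_eq_sym Hv)]).
  destruct (network_multiples_somewhere_dense NN s
    (fun w => dd j (tv_zero (E j)) (proj1_sig w j) < dl / 4) Hs Hnet)
    as [m [N [l [p [HN [NO Hp]]]]]].
  { exact (coord_open E j _ (dd_ball_open j _ _)). }
  { simpl. rewrite metric_refl by apply dd_metric. lra. }
  set (c := INR (snd (Cantor.of_nat m)) + 1).
  assert (Hc : 0 < c) by (unfold c; pose proof (pos_INR (snd (Cantor.of_nat m))); lra).
  assert (Hsmall : forall q, adherent (sigma_open E) (network_multiples s m) q ->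
            dd j (tv_zero (E j)) (tv_scale (E j) (/ c) (proj1_sig q j)) <= dl / 4).
  { intros q. apply adherent_coord_ball_le. intros g [N' [y [HN' [Ny ->]]]].
    rewrite HN in HN'. injection HN' as <-. simpl. fold c.
    rewrite (vs_scaleA _ _ _ _ (tvs_vsE (E j))), Rinv_l, (vs_scale1 _ _ _ _ (tvs_vsE (E j)))
      by lra.
    exact (NO y Ny). }
  exists m. split; [exists l, p; exact Hp|].
  intros l' [p' Hp']. apply NNPP. intros nj.
  destruct (Hp' (sigma_single E j (tv_scale (E j) c v))) as [C1 C2].
  { intros i Hi. simpl. apply (fupdate_other (fun k => E k)). intros ->. auto. }
  apply Hsmall in C1. apply Hsmall in C2. simpl in C2. rewrite fupdate_same in C2.
  rewrite (vs_scaleDr _ _ _ _ (tvs_vsE (E j))), (vs_scaleA _ _ _ _ (tvs_vsE (E j))), Rinv_l,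
    (vs_scale1 _ _ _ _ (tvs_vsE (E j))) in C2 by lra.
  pose proof (dd_translate_le j (tv_scale (E j) (/ c) (proj1_sig p' j)) v). fold dl in H. lra.
Qed.

End SigmaMetric.

Theorem mainTheorem15 (J : Type) (E : J -> tvs)
  (hnz : forall j, nonzero_tvs (E j))
  (hcm : forall j, complete_metrizable_tvs (E j))
  (hJ : ~ countable_set (fun _ : J => True)) :
  is_tvs (sigma_zero E) (sigma_add E) (sigma_opp E) (sigma_scale E) (sigma_open E) /\
  baire (sigma_open E) /\
  ~ metrizable (sigma_open E) /\
  frechet_urysohn (sigma_open E) /\
  ~ countable_cn_character (sigma_open E).
Proof.
  destruct (functional_choice_dep (fun j d => complete_invariant_metric (E j) d) hcm) as [dd Hdd].
  pose proof (sigma_not_countable_cn_character E dd Hdd hnz hJ) as Hcn.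
  split; [apply sigma_is_tvs|].
  split; [apply (sigma_baire E dd Hdd)|].
  split; [intros Hm; apply Hcn, metrizable_countable_cn_character, Hm|].
  split; [apply (sigma_frechet_urysohn E dd Hdd)|exact Hcn].
Qed.
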